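(* Let $A$ be a real $n\times n$ matrix with $n\ge2$ and strictly negative diagonal entries. If $A$ is stable, then some $2\times2$ principal submatrix of $A$ is stable.
   Context: A square matrix is stable if all its eigenvalues have strictly negative real part. A principal submatrix is obtained by restricting rows and columns to the same index set. *)

From HB Require Import structures.
From mathcomp Require Import all_boot all_order all_algebra.
Set Implicit Arguments. Unset Strict Implicit. Unset Printing Implicit Defensive.
Import Order.TTheory GRing.Theory Num.Theory.
Local Open Scope ring_scope.

Definition stable (C : numClosedFieldType) (n : nat) (A : 'M[C]_n) : Prop :=
  forall z : C, eigenvalue A z -> 'Re z < 0.

Definition pair_idx (n : nat) (i j : 'I_n) : 'I_2 -> 'I_n :=
  fun k => if k == ord0 then i else j.

Definition principal2 (C : numClosedFieldType) (n : nat) (A : 'M[C]_n)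
  (i j : 'I_n) : 'M[C]_2 :=
  mxsub (pair_idx i j) (pair_idx i j) A.

From mathcomp Require Import all_boot all_order all_algebra ring.
Import Order.TTheory GRing.Theory Num.Theory.

Set Implicit Arguments.
Unset Strict Implicit.

Local Open Scope ring_scope.

(* For real A with negative diagonal, the 2x2 principal submatrix on {i, j} is
   stable as soon as its determinant a_ii a_jj - a_ij a_ji is positive. If no
   such minor were positive, their sum over all ordered pairs, which equals
   (tr A)^2 - tr (A^2) = sum_(k <> l) l_k l_l in terms of the eigenvalues l_k,
   would be <= 0. Taking real parts, with x_k = Re l_k < 0 and
   Re (l_k^2) <= x_k^2, the same sum is at least sum_(k <> l) x_k x_l > 0. *)

Lemma Re_root_quadratic_lt0 (C : numClosedFieldType) (p q z : C) :
  p \is Num.real -> q \is Num.real -> 0 < p -> 0 < q ->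
  z ^+ 2 + p * z + q = 0 -> 'Re z < 0.
Proof.
move=> pR qR p_gt0 q_gt0 root_z.
have z_neq0 : z != 0.
  by apply: contraPneq root_z => ->; rewrite expr0n mulr0 !add0r; apply/eqP; rewrite gt_eqF.
have w_gt0 : 0 < 1 + q * `|z| ^- 2.
  by rewrite ltr_wpDr ?ltr01 // mulr_ge0 ?ltW // invr_gt0 exprn_gt0 // normr_gt0.
(* Divide the equation by z and take real parts: Re (q / z) = q Re z / |z|^2. *)
have : 'Re z * (1 + q * `|z| ^- 2) = - p.
  have E : z + p + q / z = 0.
    by rewrite -[RHS](mul0r z^-1) -root_z; field.
  have /eqP := congr1 (@Re _) E.
  rewrite raddf0 !raddfD /= (Creal_ReP _ pR) ReMl // invC_norm.
  rewrite ReMl ?Re_conj ?rpredV ?rpredX ?normr_real // => /eqP E'.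
  by apply/eqP; rewrite -addr_eq0 -E'; apply/eqP; ring.
by move=> /(congr1 (fun x => x < 0)); rewrite pmulr_llt0 // oppr_lt0 p_gt0 => ->.
Qed.

Lemma det_mx22 (R : comNzRingType) (M : 'M[R]_2) :
  \det M = M 0 0 * M 1 1 - M 0 1 * M 1 0.
Proof.
have lift0_0 : lift 0 (0 : 'I_1) = 1 :> 'I_2 by apply: val_inj.
have lift1_0 : lift 1 (0 : 'I_1) = 0 :> 'I_2 by apply: val_inj.
rewrite (expand_det_row _ 0) !big_ord_recl big_ord0 addr0 /cofactor !det_mx11.
by rewrite !mxE /= !lift0_0 lift1_0 expr0 expr1 !mul1r mulN1r mulrN.
Qed.

Lemma eigenvalue_det_sub (F : fieldType) n (A : 'M[F]_n) a :
  eigenvalue A a -> \det (a%:M - A) = 0.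
Proof.
move/eigenvalueP=> [v Av v_neq0]; apply/eqP/det0P; exists v => //.
by rewrite mulmxBr Av mul_mx_scalar subrr.
Qed.

Lemma stable_mx22 (C : numClosedFieldType) (B : 'M[C]_2) :
  B 0 0 \is Num.real -> B 1 1 \is Num.real -> B 0 1 * B 1 0 \is Num.real ->
  B 0 0 < 0 -> B 1 1 < 0 -> 0 < \det B -> stable B.
Proof.
move=> aR dR bcR a_lt0 d_lt0 detB_gt0 z /eigenvalue_det_sub.
rewrite det_mx22 !mxE /= mulr1n mulr0n !sub0r mulrNN => char_z.
apply: (@Re_root_quadratic_lt0 _ (- (B 0 0 + B 1 1)) (\det B)).
- by rewrite rpredN rpredD.
- by rewrite det_mx22 rpredB // rpredM.
- by rewrite oppr_gt0 ltr_nDl.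
- exact: detB_gt0.
- by rewrite det_mx22 -char_z; ring.
Qed.

Lemma det_principal2 (C : numClosedFieldType) n (A : 'M[C]_n) (i j : 'I_n) :
  \det (principal2 A i j) = A i i * A j j - A i j * A j i.
Proof. by rewrite det_mx22 !mxE. Qed.

Lemma sum_det_principal2 (C : numClosedFieldType) n (A : 'M[C]_n) :
  \sum_i \sum_j \det (principal2 A i j) = \tr A ^+ 2 - \tr (A *m A).
Proof.
under eq_bigr => i _ do under eq_bigr => j _ do rewrite det_principal2.
under eq_bigr => i _ do rewrite sumrB.
rewrite sumrB expr2 mulr_suml; congr (_ - _).
  by apply: eq_bigr => i _; rewrite mulr_sumr.
by apply: eq_bigr => i _; rewrite mxE.
Qed.

Lemma eigenvalue_trig (F : fieldType) n (T : 'M[F]_n) (i : 'I_n) :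
  is_trig_mx T -> eigenvalue T (T i i).
Proof.
move=> Ttrig; rewrite eigenvalue_root_char char_poly_trig // /root horner_prod.
by rewrite (bigD1 i) //= hornerXsubC subrr mul0r.
Qed.

Lemma mulmx_trig_diag (R : pzSemiRingType) n (T U : 'M[R]_n) (i : 'I_n) :
  is_trig_mx T -> is_trig_mx U -> (T *m U) i i = T i i * U i i.
Proof.
move=> /is_trig_mxP Ttrig /is_trig_mxP Utrig.
rewrite mxE (bigD1 i) //= big1 ?addr0 // => k k_neq_i.
have [i_lt_k|k_lt_i|/val_inj k_eq_i] := ltngtP i k.
- by rewrite Ttrig ?mul0r.
- by rewrite Utrig ?mulr0.
- by rewrite k_eq_i eqxx in k_neq_i.
Qed.

Lemma mxtrace_conjumx (F : fieldType) n (P A : 'M[F]_n) :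
  P \in unitmx -> \tr (conjmx P A) = \tr A.
Proof. by move=> Punit; rewrite conjumx // mxtrace_mulC mulmxA mulVmx ?mul1mx. Qed.

Lemma Re_sqr_le (C : numClosedFieldType) (z : C) : 'Re (z ^+ 2) <= 'Re z ^+ 2.
Proof. by rewrite !expr2 ReM gerDl oppr_le0 -expr2 -realEsqr Creal_Im. Qed.

Lemma sum_sqr_lt_sqr_sum (R : numDomainType) (I : finType) (x : I -> R) (i j : I) :
  i != j -> (forall k, x k < 0) -> \sum_k x k ^+ 2 < (\sum_k x k) ^+ 2.
Proof.
move=> i_neq_j x_lt0.
have cross_gt0 k l : 0 < x k * x l by rewrite nmulr_rgt0.
rewrite -subr_gt0 expr2 mulr_suml -sumrB.
have -> : \sum_k (x k * \sum_l x l - x k ^+ 2) = \sum_k \sum_(l | l != k) x k * x l.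
  by apply: eq_bigr => k _; rewrite mulr_sumr (bigD1 k) //= expr2 addrAC subrr add0r.
rewrite (bigD1 j) //= (bigD1 i) //=.
apply: ltr_wpDr; first by apply: sumr_ge0 => k _; apply: sumr_ge0 => l _; exact/ltW/cross_gt0.
apply: ltr_wpDr _ (cross_gt0 j i).
by apply: sumr_ge0 => l _; exact/ltW/cross_gt0.
Qed.

Lemma stable_trace_gap_gt0 (C : numClosedFieldType) n (A : 'M[C]_n) :
  (1 < n)%N -> stable A -> \tr A \is Num.real ->
  0 < 'Re (\tr A ^+ 2 - \tr (A *m A)).
Proof.
move=> n_gt1 Astab trA_real.
have [P /unitarymx_unit Punit] := Schur A (ltnW n_gt1).
rewrite /similar_to /=; set T := conjmx P A => Ttrig.
have Re_diag_lt0 i : 'Re (T i i) < 0.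
  apply/Astab/(eigenvalue_conjmx (stablemx_unit A Punit)); first by rewrite row_free_unit.
  exact: eigenvalue_trig.
have trA : \tr A = \sum_i T i i by rewrite -(mxtrace_conjumx A Punit).
have trA2 : \tr (A *m A) = \sum_i T i i ^+ 2.
  rewrite -(mxtrace_conjumx _ Punit) conjmxM ?inE ?stablemx_unit //.
  by apply: eq_bigr => i _; rewrite mulmx_trig_diag.
have Re_trA2 : 'Re (\tr A ^+ 2) = 'Re (\tr A) ^+ 2.
  by rewrite -{1}(Creal_ReP _ trA_real); apply/Creal_ReP; rewrite rpredX ?Creal_Re.
rewrite raddfB /= Re_trA2 subr_gt0 trA2 trA !raddf_sum /=.
have := sum_sqr_lt_sqr_sum (i := Ordinal n_gt1) (j := Ordinal (ltnW n_gt1)) isT Re_diag_lt0.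
apply: le_lt_trans.
by apply: ler_sum => i _; apply: Re_sqr_le.
Qed.

Lemma stable_principal2 (C : numClosedFieldType) n (A : 'M[C]_n) (i j : 'I_n) :
  (forall k l, A k l \is Num.real) -> (forall k, A k k < 0) ->
  0 < \det (principal2 A i j) -> stable (principal2 A i j).
Proof.
move=> Areal Adiag_lt0; apply: stable_mx22; rewrite ?mxE //.
exact: rpredM.
Qed.

Theorem mainTheorem13 (C : numClosedFieldType) (n : nat) (A : 'M[C]_n) :
  (2 <= n)%N ->
  (forall i j : 'I_n, A i j \is Num.real) ->
  (forall i : 'I_n, A i i < 0) ->
  stable A ->
  exists i j : 'I_n, i != j /\ stable (principal2 A i j).
Proof.
move=> n_ge2 Areal Adiag_lt0 Astab.
have [/existsP[i /existsP[j /andP[i_neq_j det_gt0]]]|no_pair] :=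
  boolP [exists i, exists j, (i != j) && (0 < \det (principal2 A i j))].
  by exists i, j; split; last exact: stable_principal2.
have det_real i j : \det (principal2 A i j) \is Num.real.
  by rewrite det_principal2 rpredB ?rpredM.
have det_le0 i j : \det (principal2 A i j) <= 0.
  have [<-|i_neq_j] := eqVneq i j; first by rewrite det_principal2 subrr.
  rewrite real_leNgt ?det_real //; apply: contra no_pair => det_gt0.
  by apply/existsP; exists i; apply/existsP; exists j; rewrite i_neq_j det_gt0.
have sum_le0 : \sum_i \sum_j \det (principal2 A i j) <= 0.
  by apply: sumr_le0 => i _; apply: sumr_le0.
have gap := stable_trace_gap_gt0 n_ge2 Astab (rpred_sum _ (fun i _ => Areal i i)).
rewrite -sum_det_principal2 (Creal_ReP _ _) in gap; last by do 2 apply: rpred_sum => ? _.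
by have := lt_le_trans gap sum_le0; rewrite ltxx.
Qed.
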